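(* For every product distribution $\mathcal{D}=\prod_{r=1}^d\mathcal{D}_r$ on $[n]^d$, $\Delta(\mathcal{D})\le 5\,\Delta^*(\mathcal{D})$.
   Context: For a distribution $\mathcal{D}_r$ on $[n]$ with mass function $\mu$, the median BST $T_r$ is built recursively: for an interval $I$ of integers, its root is the smallest $t\in I$ with $\mu(\{s\in I:s\le t\})\ge\mu(I)/2$, and the left and right subtrees are the median BSTs of $\{s\in I:s<t\}$ and $\{s\in I:s>t\}$ (empty intervals give empty trees); $T_r$ is the median BST of $[n]$. Depth of a node is the number of edges to the root. $\Delta(\mathcal{D})=\sum_{r=1}^d\mathbb{E}_{x\sim\mathcal{D}_r}[\mathrm{depth}_{T_r}(x)]$, and $\Delta^*(\mathcal{D})=\sum_{r=1}^d\min_T\mathbb{E}_{x\sim\mathcal{D}_r}[\mathrm{depth}_T(x)]$, the minimum over all binary search trees $T$ on $[n]$. *)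

From mathcomp Require Import all_boot all_order all_algebra.
Set Implicit Arguments. Unset Strict Implicit. Unset Printing Implicit Defensive.
Import Order.TTheory GRing.Theory Num.Theory.
Local Open Scope ring_scope.

(* Binary trees with natural-number keys; keys of [n] are 1..n. *)
Inductive tree := Leaf | Node of tree & nat & tree.

Fixpoint inorder (T : tree) : seq nat :=
  match T with Leaf => [::] | Node l k r => inorder l ++ k :: inorder r end.

Definition is_bst_on (n : nat) (T : tree) : Prop := inorder T = iota 1 n.

Fixpoint depth (T : tree) (x : nat) : nat :=
  match T with
  | Leaf => 0
  | Node l k r =>
      if x == k then 0%N
      else if (x < k)%N then (depth l x).+1 else (depth r x).+1
  end.

Section Dist.
Variable R : realFieldType.

Definition is_dist (n : nat) (mu : nat -> R) : Prop :=
  (forall i, (1 <= i <= n)%N -> 0 <= mu i) /\ \sum_(1 <= i < n.+1) mu i = 1.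

Definition imass (mu : nat -> R) (a len : nat) : R := \sum_(a <= s < a + len) mu s.

(* median BST of the interval {a, ..., a+len-1}; fuel >= len suffices *)
Fixpoint median_tree_fuel (mu : nat -> R) (fuel a len : nat) : tree :=
  match fuel with
  | 0 => Leaf
  | f.+1 =>
      if len == 0%N then Leaf else
      let idx := find (fun t => imass mu a len / 2%:R <= imass mu a (t - a).+1)
                      (iota a len) in
      let t := (a + idx)%N in
      Node (median_tree_fuel mu f a idx) t
           (median_tree_fuel mu f t.+1 (len - idx).-1)
  end.

Definition median_tree (mu : nat -> R) (n : nat) : tree :=
  median_tree_fuel mu n 1 n.

Definition exp_depth (n : nat) (mu : nat -> R) (T : tree) : R :=
  \sum_(1 <= x < n.+1) mu x * (depth T x)%:R.

(* Delta(D) for the product distribution with marginals mu 0, ..., mu (d-1) *)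
Definition Delta (d n : nat) (mu : nat -> nat -> R) : R :=
  \sum_(r < d) exp_depth n (mu r) (median_tree (mu r) n).

End Dist.

From mathcomp Require Import all_boot all_order all_algebra.
From mathcomp Require Import zify lra.
Import Order.TTheory GRing.Theory Num.Theory.
Set Implicit Arguments.
Unset Strict Implicit.
Unset Printing Implicit Defensive.

(* Fix any search tree T and, for a segment I of keys, let C(I) weigh each x in I
   by the number of its T-ancestors that lie in I; C([1, n]) <= E[depth_T].
   Split I at its median t into L, {t}, R.  Ancestors counted in C(L) and C(R)
   are still counted in C(I); moreover the key m of I highest in T is an ancestor
   of every other key of I, which adds the mass of the two parts not containing m.
   By the median property that extra mass is at least (mass L + mass R) / 2, while
   the median tree pays exactly mass L + mass R on top of its two subtrees.  By
   induction the median tree costs at most 2 C(I), so each coordinate of Delta is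
   at most twice that of any BST, a fortiori at most five times. *)

Fixpoint ancestors (T : tree) (x : nat) : seq nat :=
  match T with
  | Leaf => [::]
  | Node l k r =>
      if x == k then [::]
      else k :: (if (x < k)%N then ancestors l x else ancestors r x)
  end.

Lemma depth_ancestors T x : depth T x = size (ancestors T x).
Proof.
elim: T => [//|l IHl k r IHr] /=.
by case: (x == k) => //; case: (x < k)%N => /=; rewrite ?IHl ?IHr.
Qed.

Definition segment (a b : nat) : pred nat := fun z => (a <= z < b)%N.

Lemma segment_top T a b : pairwise ltn (inorder T) -> (a < b)%N ->
    (forall z, segment a b z -> z \in inorder T) ->
  exists2 m, segment a b m &
    forall y, segment a b y -> y != m -> m \in ancestors T y.
Proof.
elim: T => [|l IHl k r IHr] /= + ltab keysT.
  by have /keysT : segment a b a by rewrite /segment leqnn ltab.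
rewrite pairwise_cat pairwise_cons.
move=> /and3P[/allrelP lt_lk sorted_l /andP[/allP lt_kr sorted_r]].
have lt_k z : z \in inorder l -> (z < k)%N by move/lt_lk; apply; apply: mem_head.
have [kab|kNab] := boolP (segment a b k).
  by exists k => // y _ yNk; rewrite (negbTE yNk) mem_head.
have [ltka|leak] := ltnP k a.
  have [|m mab top] := IHr sorted_r ltab.
    move=> z zab; move: (keysT z zab); rewrite mem_cat inE => /or3P[/lt_k|/eqP|//].
      by move: zab; rewrite /segment; lia.
    by move: zab; rewrite /segment; lia.
  exists m => // y yab yNm; have ltky : (k < y)%N by move: yab; rewrite /segment; lia.
  by rewrite gtn_eqF // ltnNge ltnW //= inE top ?orbT.
have ltbk : (b <= k)%N by move: kNab; rewrite /segment; lia.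
have [|m mab top] := IHl sorted_l ltab.
  move=> z zab; move: (keysT z zab); rewrite mem_cat inE => /or3P[//|/eqP|/lt_kr].
    by move: zab; rewrite /segment; lia.
  by move: zab; rewrite /segment; lia.
exists m => // y yab yNm; have ltyk : (y < k)%N by move: yab; rewrite /segment; lia.
by rewrite ltn_eqF //= ltyk inE top ?orbT.
Qed.

Lemma count_sub_add (V : eqType) (J I : pred V) s m : subpred J I -> I m ->
  (~~ J m -> m \in s) -> (count J s + ~~ J m <= count I s)%N.
Proof.
move=> subJI Im; have [_ _|Jm /(_ isT) ms] := boolP (J m); first by rewrite addn0 sub_count.
have disj : count (predI J (pred1 m)) s = 0%N.
  rewrite (eq_count (a2 := pred0)) ?count_pred0 // => z /=.
  by case: eqP => [->|]; rewrite ?(negbTE Jm) ?andbF.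
have subUI : subpred (predU J (pred1 m)) I by move=> z /orP[/subJI|/eqP->].
apply: leq_trans (sub_count subUI s).
rewrite -[X in (_ <= X)%N]addn0 -disj count_predUI leq_add2l -has_count.
by apply/hasP; exists m => /=.
Qed.

Local Open Scope ring_scope.

Lemma big_nat_split3 (V : nmodType) (F : nat -> V) a t b : (a <= t < b)%N ->
  \sum_(a <= x < b) F x = \sum_(a <= x < t) F x + F t + \sum_(t.+1 <= x < b) F x.
Proof.
by case/andP=> leat ltb; rewrite (big_cat_nat leat (ltnW ltb)) /= (big_ltn ltb) addrA.
Qed.

Section Costs.
Variables (R : realFieldType) (mu : nat -> R).

Local Notation mass a b := (\sum_(a <= x < b) mu x).

Definition depth_cost (T : tree) (a b : nat) : R :=
  \sum_(a <= x < b) mu x * (depth T x)%:R.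

Definition ancestor_cost (T : tree) (a b : nat) : R :=
  \sum_(a <= x < b) mu x * (count (segment a b) (ancestors T x))%:R.

Lemma depth_cost_node l t r a b : (a <= t < b)%N ->
  depth_cost (Node l t r) a b =
  depth_cost l a t + mass a t + (depth_cost r t.+1 b + mass t.+1 b).
Proof.
move=> tab; rewrite /depth_cost (big_nat_split3 _ tab) /= eqxx mulr0 addr0 -!big_split.
congr (_ + _); apply: eq_big_nat => x /andP[lo hi] /=.
  by rewrite ltn_eqF // hi -addn1 natrD mulrDr mulr1.
by rewrite gtn_eqF // ltnNge ltnW //= -addn1 natrD mulrDr mulr1.
Qed.

Lemma ancestor_cost_le_depth_cost T a b : (forall x, segment a b x -> 0 <= mu x) ->
  ancestor_cost T a b <= depth_cost T a b.
Proof.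
move=> mu_ge0; apply: ler_sum_nat => x xab; apply: ler_wpM2l; first exact: mu_ge0.
by rewrite ler_nat depth_ancestors count_size.
Qed.

Section AncestorCost.
Variables (T : tree) (m a b : nat).
Hypothesis mab : segment a b m.
Hypothesis m_top : forall y, segment a b y -> y != m -> m \in ancestors T y.

Lemma ancestor_cost_sub c e : (a <= c)%N -> (e <= b)%N ->
    (forall x, segment c e x -> 0 <= mu x) ->
  ancestor_cost T c e + (~~ segment c e m)%:R * mass c e <=
  \sum_(c <= x < e) mu x * (count (segment a b) (ancestors T x))%:R.
Proof.
move=> leac leeb mu_ge0; rewrite /ancestor_cost mulr_sumr -big_split /=.
apply: ler_sum_nat => x xce; rewrite (mulrC _ (mu x)) -mulrDr -natrD.
rewrite ler_wpM2l ?mu_ge0 // ler_nat count_sub_add //.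
  by move=> z; rewrite /segment; lia.
move=> mNce; apply: m_top; first by move: xce; rewrite /segment; lia.
by apply: contraNneq mNce => <-.
Qed.

Lemma ancestor_cost_split t : (a <= t < b)%N ->
    (forall x, segment a b x -> 0 <= mu x) ->
  ancestor_cost T a t + ancestor_cost T t.+1 b +
    ((~~ segment a t m)%:R * mass a t + (m != t)%:R * mu t +
     (~~ segment t.+1 b m)%:R * mass t.+1 b)
  <= ancestor_cost T a b.
Proof.
move=> tab mu_ge0; have /andP[leat ltb] := tab.
have sub_ge0 c e : (a <= c)%N -> (e <= b)%N -> forall x, segment c e x -> 0 <= mu x.
  by move=> lec leeb x xce; apply: mu_ge0; move: xce; rewrite /segment; lia.
have left := @ancestor_cost_sub a t (leqnn a) (ltnW ltb) (sub_ge0 _ _ (leqnn a) (ltnW ltb)).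
have mid := @ancestor_cost_sub t t.+1 leat ltb (sub_ge0 _ _ leat ltb).
have right := @ancestor_cost_sub t.+1 b (leqW leat) (leqnn b) (sub_ge0 _ _ (leqW leat) (leqnn b)).
have mid_ge0 : 0 <= ancestor_cost T t t.+1.
  by rewrite /ancestor_cost big_nat1 mulr_ge0 ?mu_ge0.
have seg_t : segment t t.+1 m = (m == t) by rewrite /segment ltnS -eqn_leq eq_sym.
rewrite seg_t !big_nat1 in mid.
rewrite [ancestor_cost T a b](big_nat_split3 _ tab); lra.
Qed.
End AncestorCost.

Definition median_index (a len : nat) : nat :=
  find (fun t => imass mu a len / 2%:R <= imass mu a (t - a).+1) (iota a len).

Section Median.
Variables (a len : nat).
Hypothesis len_gt0 : (0 < len)%N.
Hypothesis mu_ge0 : forall x, segment a (a + len) x -> 0 <= mu x.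

Lemma median_index_lt : (median_index a len < len)%N.
Proof.
rewrite /median_index -[X in (_ < X)%N](size_iota a len) -has_find.
apply/hasP; exists (a + len.-1)%N; first by rewrite mem_iota; lia.
have -> : ((a + len.-1 - a).+1 = len)%N by lia.
have : 0 <= imass mu a len.
  by rewrite /imass big_nat_cond sumr_ge0 // => x /andP[xa _]; apply: mu_ge0.
lra.
Qed.

Lemma median_index_balanced (t := (a + median_index a len)%N) :
  mass a t <= mu t + mass t.+1 (a + len) /\ mass t.+1 (a + len) <= mass a t + mu t.
Proof.
have idx_lt := median_index_lt.
have tal : (a <= t < a + len)%N by rewrite /t; lia.
have Etot : imass mu a len = mass a t + mu t + mass t.+1 (a + len).
  exact: big_nat_split3.
have imass_ge0 : 0 <= imass mu a len.
  by rewrite /imass big_nat_cond sumr_ge0 // => x /andP[xa _]; apply: mu_ge0.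
have above : imass mu a len / 2%:R <= mass a t + mu t.
  have := @nth_find _ 0%N (fun t => imass mu a len / 2%:R <= imass mu a (t - a).+1) (iota a len).
  rewrite has_find size_iota -/(median_index a len) nth_iota // addKn => /(_ idx_lt).
  by rewrite /imass -addSnnS big_nat_recr //= leq_addr.
have below : mass a t <= imass mu a len / 2%:R.
  case: (posnP (median_index a len)) => [idx0|idx_gt0].
    by rewrite /t idx0 addn0 big_geq // divr_ge0 ?ler0n.
  have := @before_find _ 0%N (fun t => imass mu a len / 2%:R <= imass mu a (t - a).+1)
    (iota a len) (median_index a len).-1.
  rewrite -/(median_index a len) nth_iota; last by lia.
  rewrite addKn prednK // => /(_ (leqnn _)) /negbT; rewrite -ltNge => /ltW.
  by rewrite /imass.
move: above below; rewrite Etot; lra.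
Qed.

End Median.

Lemma balanced_masses_le (L M N : R) a t b m : 0 <= L -> 0 <= M -> 0 <= N ->
    L <= M + N -> N <= L + M -> segment a b m ->
  L + N <= 2%:R * ((~~ segment a t m)%:R * L + (m != t)%:R * M +
                   (~~ segment t.+1 b m)%:R * N).
Proof.
rewrite /segment => L0 M0 N0 LMN NLM /andP[leam ltmb].
by case: ltngtP => [ltmt|lttm|->]; rewrite ?leam ?ltmb ?ltmt ?andbT ?andbF /=; lra.
Qed.

Lemma median_depth_cost_le T f a len : (len <= f)%N -> pairwise ltn (inorder T) ->
    (forall z, segment a (a + len) z -> z \in inorder T) ->
    (forall x, segment a (a + len) x -> 0 <= mu x) ->
  depth_cost (median_tree_fuel mu f a len) a (a + len) <=
  2%:R * ancestor_cost T a (a + len).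
Proof.
move=> + sortedT; elim: f a len => [|f IH] a len le_len keys mu_ge0;
  have [len0|len_gt0] := posnP len.
1,3: by rewrite len0 addn0 /depth_cost /ancestor_cost !big_geq // mulr0.
  by lia.
rewrite /= gtn_eqF // -/(median_index a len).
have idx_lt := median_index_lt len_gt0 mu_ge0.
have [balL balR] := median_index_balanced len_gt0 mu_ge0.
set idx := median_index a len in idx_lt balL balR *; set t := (a + idx)%N in balL balR *.
have tI : (a <= t < a + len)%N by rewrite /t; lia.
have sub_ge0 c e : (a <= c)%N -> (e <= a + len)%N -> forall x, segment c e x -> 0 <= mu x.
  by move=> lec leeb x xce; apply: mu_ge0; move: xce; rewrite /segment; lia.
have sub_keys c e : (a <= c)%N -> (e <= a + len)%N -> forall z, segment c e z -> z \in inorder T.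
  by move=> lec leeb z zce; apply: keys; move: zce; rewrite /segment; lia.
have IHL : depth_cost (median_tree_fuel mu f a idx) a t <= 2%:R * ancestor_cost T a t.
  apply: IH; first by lia.
    by apply: sub_keys; rewrite /t; lia.
  by apply: sub_ge0; rewrite /t; lia.
have endR : (t.+1 + (len - idx).-1 = a + len)%N by rewrite /t; lia.
have IHR : depth_cost (median_tree_fuel mu f t.+1 (len - idx).-1) t.+1 (a + len) <=
           2%:R * ancestor_cost T t.+1 (a + len).
  rewrite -endR; apply: IH; first by lia.
    by rewrite endR; apply: sub_keys; rewrite /t; lia.
  by rewrite endR; apply: sub_ge0; rewrite /t; lia.
have [|m mI m_top] := segment_top sortedT _ keys; first by lia.
have cost_split := ancestor_cost_split mI m_top tI mu_ge0.
have mass_ge0 c e : (a <= c)%N -> (e <= a + len)%N -> 0 <= mass c e.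
  by move=> lec leeb; rewrite big_nat_cond sumr_ge0 // => x /andP[xce _]; exact: sub_ge0 xce.
have := balanced_masses_le t (mass_ge0 _ _ (leqnn a) (ltnW (proj2 (andP tI))))
  (mu_ge0 t tI) (mass_ge0 _ _ (leqW (proj1 (andP tI))) (leqnn _)) balL balR mI.
rewrite depth_cost_node //; lra.
Qed.

End Costs.

Lemma median_exp_depth_le (R : realFieldType) (n : nat) (mu : nat -> R) (T : tree) :
    (forall i, (1 <= i <= n)%N -> 0 <= mu i) -> is_bst_on n T ->
  exp_depth n mu (median_tree mu n) <= 2%:R * exp_depth n mu T.
Proof.
move=> mu_ge0 bstT.
have sortedT : pairwise ltn (inorder T).
  by rewrite bstT -(sorted_pairwise ltn_trans) iota_ltn_sorted.
have seg_ge0 x : segment 1 (1 + n) x -> 0 <= mu x by rewrite /segment => ?; apply: mu_ge0; lia.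
have keysT z : segment 1 (1 + n) z -> z \in inorder T by rewrite bstT mem_iota /segment; lia.
rewrite /exp_depth -add1n.
apply: le_trans (median_depth_cost_le (leqnn n) sortedT keysT seg_ge0) _.
by rewrite ler_pM2l ?ltr0n // ancestor_cost_le_depth_cost.
Qed.

Theorem lemma5p17 (R : realFieldType) (d n : nat) (mu : nat -> nat -> R) :
  (forall r, (r < d)%N -> is_dist n (mu r)) ->
  forall T : nat -> tree, (forall r, (r < d)%N -> is_bst_on n (T r)) ->
  Delta d n mu <= 5%:R * \sum_(r < d) exp_depth n (mu r) (T r).
Proof.
move=> dist_mu T bstT; rewrite /Delta mulr_sumr; apply: ler_sum => r _.
have [mu_ge0 _] := dist_mu r (ltn_ord r).
apply: le_trans (median_exp_depth_le mu_ge0 (bstT r (ltn_ord r))) _.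
rewrite ler_wpM2r ?ler_nat //.
rewrite /exp_depth big_nat_cond sumr_ge0 // => x /andP[/andP[x1 xn] _].
by rewrite mulr_ge0 ?mu_ge0 ?x1.
Qed.
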